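(* For $a\in\mathfrak z$ and $w\in\mathfrak{H}^1$: (i) $S_\hbar^t(a\circ_+w)=a\circ_+S_\hbar^t(w)$; (ii) $S_\hbar^t(wy)=\gamma_\hbar^t(w)\,y$, where $\gamma_\hbar^t$ is the algebra automorphism of $\mathfrak{H}$ with $\gamma_\hbar^t(x)=x$ and $\gamma_\hbar^t(y)=tx+y+\hbar t$.
   Context: Let $\hbar,t$ be formal variables and $\mathfrak{H}=\mathbb{Q}[\hbar,t]\langle x,y\rangle$ the noncommutative polynomial algebra over $\mathbb{Q}[\hbar,t]$; put $\mathfrak{H}^1=\mathbb{Q}[\hbar,t]+\mathfrak{H}y$ and $z_j=x^{j-1}y$ ($j\ge1$). Let $\mathfrak z$ be the $\mathbb{Q}[\hbar,t]$-submodule spanned by $\{z_j\}_{j\ge1}$, with the $\mathbb{Q}[\hbar,t]$-bilinear product $z_i\circ_+ z_j=z_{i+j}+\hbar z_{i+j-1}$, extended to an action of $\mathfrak z$ on $\mathfrak{H}^1$ by $z_i\circ_+1=0$, $z_i\circ_+(z_jw)=(z_i\circ_+z_j)w$ ($w\in\mathfrak{H}^1$). Let $S_\hbar^t:\mathfrak{H}^1\to\mathfrak{H}^1$ be the $\mathbb{Q}[\hbar,t]$-linear map with $S_\hbar^t(1)=1$ and $S_\hbar^t(z_kw)=z_kS_\hbar^t(w)+t\,z_k\circ_+S_\hbar^t(w)$ for $k\ge1$ and words $w\in\mathfrak{H}^1$. *)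

From mathcomp Require Import all_boot all_algebra.
Set Implicit Arguments. Unset Strict Implicit. Unset Printing Implicit Defensive.
Import GRing.Theory.
Local Open Scope ring_scope.

(** Coefficient ring Q[hbar, t] := (Q[hbar])[t]. *)
Definition R : comNzRingType := {poly {poly rat}}.
Definition tt_ : R := 'X.
Definition hbar : R := ('X)%:P.

Definition x : bool := false.
Definition y : bool := true.
Definition word := seq bool.

(** An element of H = Q[hbar,t]<x,y> is represented as a formal linear
    combination (finite list of (coefficient, word)); two representations
    denote the same element iff they have the same coefficient function. *)
Definition H := seq (R * word).
Definition hcoef (p : H) (u : word) : R := \sum_(m <- p | m.2 == u) m.1.
Definition heq (p q : H) : Prop := forall u, hcoef p u = hcoef q u.

Definition hone : H := [:: (1, [::])].
Definition hword (u : word) : H := [:: (1, u)].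
Definition hscale (c : R) (p : H) : H := [seq (c * m.1, m.2) | m <- p].
Definition hadd (p q : H) : H := p ++ q.
Definition hmul (p q : H) : H := [seq (a.1 * b.1, a.2 ++ b.2) | a <- p, b <- q].
Definition hlin (f : word -> H) (p : H) : H := flatten [seq hscale m.1 (f m.2) | m <- p].

Definition z (j : nat) : word := rcons (nseq j.-1 x) y.

Definition inH1 (p : H) : Prop :=
  forall u, hcoef p u != 0 -> u = [::] \/ last x u = y.
Definition inZ (a : H) : Prop :=
  forall u, hcoef a u != 0 -> exists2 j, (0 < j)%N & u = z j.

(** split a word v = z_j w' (first block); None if v contains no y *)
Definition split_z (v : word) : option (nat * word) :=
  let i := index y v in
  if (i < size v)%N then Some (i.+1, drop i.+1 v) else None.

(** z_k o+ v for a word v of H^1: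
    z_k o+ 1 = 0,  z_k o+ (z_j w') = (z_(k+j) + hbar z_(k+j-1)) w' *)
Definition zcirc (k : nat) (v : word) : H :=
  match split_z v with
  | Some (j, w') => [:: (1, z (k + j) ++ w'); (hbar, z (k + j).-1 ++ w')]
  | None => [::]
  end.

Definition circ_word (u v : word) : H :=
  match split_z u with Some (i, _) => zcirc i v | None => [::] end.
Definition circ (a w : H) : H := hlin (fun u => hlin (circ_word u) w) a.

(** decomposition of a word into blocks z_(k_1) ... z_(k_n)
    (trailing x's, which never occur in H^1, are dropped) *)
Fixpoint zdec (n : nat) (v : word) : seq nat :=
  match v with
  | [::] => [::]
  | b :: v' => if b then n.+1 :: zdec 0 v' else zdec n.+1 v'
  end.

Fixpoint Sz (ks : seq nat) : H :=
  match ks with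
  | [::] => hone
  | k :: ks' => hadd (hmul (hword (z k)) (Sz ks'))
                     (hscale tt_ (hlin (zcirc k) (Sz ks')))
  end.
Definition S (p : H) : H := hlin (fun u => Sz (zdec 0 u)) p.

Definition gamma_letter (b : bool) : H :=
  if b then [:: (tt_, [:: x]); (1, [:: y]); (hbar * tt_, [::])]
  else [:: (1, [:: x])].
Fixpoint gamma_word (u : word) : H :=
  match u with
  | [::] => hone
  | b :: u' => hmul (gamma_letter b) (gamma_word u')
  end.
Definition gamma (p : H) : H := hlin gamma_word p.

From mathcomp Require Import all_boot all_algebra.
From mathcomp Require Import ring.
Set Implicit Arguments. Unset Strict Implicit. Unset Printing Implicit Defensive.
Import GRing.Theory.
Local Open Scope ring_scope.

(** A formal combination is determined by its pairings with all functionals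
    [F : word -> R], so it suffices to compare pairings.  On a
    word [z_a w] the map [S] unfolds once into [z_a S(w) + t z_a o+ S(w)], and
    [z_k o+ x^a y w = x^(k+a) y w + hbar x^(k+a-1) y w].  Identity (i) is then
    associativity of [o+] on generators, [(z_j o+ z_a) o+ u = z_j o+ (z_a o+ u)];
    identity (ii) follows by induction on [w], the letter [y] of [w] producing
    the three terms [t x], [y], [hbar t] of [gamma(y)]. *)

Definition hpair (p : H) (F : word -> R) : R := \sum_(m <- p) m.1 * F m.2.

Lemma hpair_nil F : hpair [::] F = 0.
Proof. exact: big_nil. Qed.

Lemma hpair_cons m p F : hpair (m :: p) F = m.1 * F m.2 + hpair p F.
Proof. exact: big_cons. Qed.

Lemma hpair_cat p q F : hpair (p ++ q) F = hpair p F + hpair q F.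
Proof. exact: big_cat. Qed.

Lemma hpair_word u F : hpair (hword u) F = F u.
Proof. by rewrite hpair_cons hpair_nil mul1r addr0. Qed.

Lemma hpair_one F : hpair hone F = F [::].
Proof. exact: hpair_word. Qed.

Lemma hpair_scale c p F : hpair (hscale c p) F = c * hpair p F.
Proof. by rewrite /hpair big_map mulr_sumr; apply: eq_bigr => m _; rewrite mulrA. Qed.

Lemma hpair_lin f p F : hpair (hlin f p) F = hpair p (fun u => hpair (f u) F).
Proof.
by rewrite /hpair big_flatten big_map; apply: eq_bigr => m _; exact: hpair_scale.
Qed.

Lemma hlin_nil p : hlin (fun=> [::]) p = [::].
Proof. by elim: p. Qed.

Lemma hpair_mul p q F :
  hpair (hmul p q) F = hpair p (fun u => hpair q (fun v => F (u ++ v))).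
Proof.
rewrite /hpair big_allpairs_dep; apply: eq_bigr => a _.
by rewrite mulr_sumr; apply: eq_bigr => b _; rewrite mulrA.
Qed.

Lemma eq_hpair p F G : F =1 G -> hpair p F = hpair p G.
Proof. by move=> eFG; apply: eq_bigr => m _; rewrite eFG. Qed.

Lemma hpairDr p F G : hpair p (fun u => F u + G u) = hpair p F + hpair p G.
Proof. by rewrite /hpair -big_split; apply: eq_bigr => m _; rewrite mulrDr. Qed.

Lemma hpairZr c p F : hpair p (fun u => c * F u) = c * hpair p F.
Proof. by rewrite /hpair mulr_sumr; apply: eq_bigr => m _; rewrite mulrCA. Qed.

Lemma heq_hpair p q : (forall F, hpair p F = hpair q F) -> heq p q.
Proof.
move=> epq u; have coefE r : hcoef r u = hpair r (fun v => (v == u)%:R).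
  by rewrite /hcoef /hpair big_mkcond; apply: eq_bigr => m _; case: eqP; rewrite ?mulr1 ?mulr0.
by rewrite !coefE epq.
Qed.

Variant word_block_spec : word -> Type :=
  | WordX n : word_block_spec (nseq n x)
  | WordZ a w : word_block_spec (nseq a x ++ y :: w).

Lemma word_blockP v : word_block_spec v.
Proof.
elim: v => [|[] v IHv]; first exact: (WordX 0).
  exact: (WordZ 0).
by case: IHv => [n | a w]; [apply: (WordX n.+1) | apply: (WordZ a.+1)].
Qed.

Lemma z_cat k u : z k.+1 ++ u = nseq k x ++ y :: u.
Proof. by rewrite /z -cats1 -catA. Qed.

Lemma nseq_z m n : nseq m x ++ z n.+1 = z (m + n).+1.
Proof. by rewrite /z nseqD rcons_cat. Qed.

Lemma mem_y_z n : y \in z n.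
Proof. by rewrite /z mem_rcons mem_head. Qed.

Lemma mem_y_block a w : y \in nseq a x ++ y :: w.
Proof. by rewrite mem_cat mem_head orbT. Qed.

Lemma zcirc_notin k u : y \notin u -> zcirc k u = [::].
Proof. by move=> yNu; rewrite /zcirc /split_z memNindex // ltnn. Qed.

Lemma hpair_zcirc k u F : y \in u ->
  hpair (zcirc k.+1 u) F = F (nseq k.+1 x ++ u) + hbar * F (nseq k x ++ u).
Proof.
case: (word_blockP u) => [n | a w _]; first by rewrite mem_nseq andbF.
rewrite /zcirc; have -> : split_z (nseq a x ++ y :: w) = Some (a.+1, w).
  rewrite /split_z index_cat mem_nseq andbF size_nseq /=.
  by rewrite addn0 size_cat size_nseq /= addnS ltnS leq_addr -z_cat drop_size_cat // size_rcons size_nseq.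
rewrite !hpair_cons hpair_nil mul1r addr0 !addnS !z_cat.
by rewrite !nseqD -!catA.
Qed.

Lemma zcircA j a F u :
  hpair (zcirc a.+1 u) (fun v => hpair (zcirc j.+1 v) F) =
  hpair (zcirc (j + a).+2 u) F + hbar * hpair (zcirc (j + a).+1 u) F.
Proof.
have [yu | yNu] := boolP (y \in u); last by rewrite !zcirc_notin // !hpair_nil mulr0 addr0.
rewrite !hpair_zcirc // ?mem_cat ?yu ?orbT //.
rewrite !catA -!nseqD !addSn !addnS; ring.
Qed.

Definition Sword (u : word) : H := Sz (zdec 0 u).

Lemma hpair_S p F : hpair (S p) F = hpair p (fun u => hpair (Sword u) F).
Proof. exact: hpair_lin. Qed.

Lemma Sword_nseq n : Sword (nseq n x) = hone.
Proof. by rewrite /Sword; elim: n 0%N => [|n IHn] m //=. Qed.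

Lemma hpair_Sword_block a w F :
  hpair (Sword (nseq a x ++ y :: w)) F =
  hpair (Sword w) (fun u => F (z a.+1 ++ u))
  + tt_ * hpair (Sword w) (fun u => hpair (zcirc a.+1 u) F).
Proof.
have zdec_block n : zdec n (nseq a x ++ y :: w) = (n + a).+1 :: zdec 0 w.
  by elim: a n => [|a IHa] n; rewrite ?addn0 //= IHa addnS.
by rewrite /Sword zdec_block /= /hadd hpair_cat hpair_mul hpair_word hpair_scale hpair_lin.
Qed.

Lemma hpair_Sword_zcirc k v F :
  hpair (zcirc k.+1 v) (fun u => hpair (Sword u) F) =
  hpair (Sword v) (fun u => hpair (zcirc k.+1 u) F).
Proof.
case: (word_blockP v) => [n | a w].
  by rewrite zcirc_notin ?mem_nseq ?andbF // Sword_nseq hpair_one zcirc_notin // !hpair_nil.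
rewrite hpair_zcirc ?mem_y_block // !catA -!nseqD !hpair_Sword_block.
under [X in _ = X + _]eq_hpair => u do rewrite hpair_zcirc ?mem_cat ?mem_y_z // !catA !nseq_z.
by rewrite (eq_hpair _ (zcircA k a F)) !hpairDr !hpairZr addSn; ring.
Qed.

Lemma cat_nseqS (T : Type) n (c : T) s : nseq n.+1 c ++ s = nseq n c ++ c :: s.
Proof. by elim: n => //= n ->. Qed.

Lemma hpair_gamma_nseq n u G :
  hpair (gamma_word (nseq n x ++ u)) G =
  hpair (gamma_word u) (fun v => G (nseq n x ++ v)).
Proof. by elim: n G => [|n IHn] G; [exact: eq_hpair | rewrite /= hpair_mul hpair_word IHn]. Qed.

Lemma hpair_gamma_y u G :
  hpair (gamma_word (y :: u)) G =
  tt_ * hpair (gamma_word u) (fun v => G (x :: v))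
  + hpair (gamma_word u) (fun v => G (y :: v))
  + hbar * tt_ * hpair (gamma_word u) G.
Proof. by rewrite /= hpair_mul !hpair_cons hpair_nil mul1r addr0 addrA. Qed.

Lemma hpair_Sword_cat_y n v F :
  hpair (Sword (nseq n x ++ v ++ [:: y])) F =
  hpair (gamma_word (nseq n x ++ v)) (fun u => F (u ++ [:: y])).
Proof.
elim: v n F => [|[] v IHv] n F /=.
- rewrite hpair_Sword_block hpair_gamma_nseq /Sword /= !hpair_one.
  by rewrite zcirc_notin // hpair_nil mulr0 addr0 !cats0 cats1.
- rewrite -[true]/y hpair_Sword_block -[Sword (v ++ _)]/(Sword (nseq 0 x ++ v ++ [:: y])) !IHv /=.
  rewrite hpair_gamma_nseq hpair_gamma_y.
  under [X in X + _ = _]eq_hpair => u do rewrite catA z_cat.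
  under [X in _ + _ * X = _]eq_hpair => u
    do rewrite hpair_zcirc ?mem_cat ?mem_head ?orbT // !catA cat_nseqS.
  by rewrite hpairDr hpairZr; ring.
- by rewrite -[false]/x -cat_nseqS IHv cat_nseqS.
Qed.

Theorem lemma2p1 :
  (forall a w : H, inZ a -> inH1 w -> heq (S (circ a w)) (circ a (S w))) /\
  (forall w : H, inH1 w -> heq (S (hmul w (hword [:: y]))) (hmul (gamma w) (hword [:: y]))).
Proof.
split=> [a w _ _ | w _]; apply: heq_hpair => F.
  rewrite hpair_S /circ !hpair_lin; apply: eq_hpair => u.
  rewrite /circ_word /split_z; case: ifP => _; last by rewrite !hlin_nil !hpair_nil.
  rewrite [RHS]hpair_lin hpair_S [LHS]hpair_lin; apply: eq_hpair => v; exact: hpair_Sword_zcirc.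
rewrite hpair_S /gamma !hpair_mul hpair_lin; apply: eq_hpair => v.
rewrite hpair_word -[v ++ _]/(nseq 0 x ++ v ++ [:: y]) hpair_Sword_cat_y.
by apply: eq_hpair => u; rewrite hpair_word.
Qed.
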